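(* Let $\nu,\mu\in\Lambda(n;r)$. Then $\xi_\nu J_R(n,r)\xi_\mu=0$ unless $\nu\triangleright\mu$. If $\nu\triangleright\mu$, then $\{\xi_\omega:\omega\in\Lambda^1(n,n;r),\ \omega^1=\mu,\ \omega^2=\nu\}$ is an $R$-basis of the free $R$-module $\xi_\nu J_R(n,r)\xi_\mu$.
   Context: $R$ commutative ring with identity, $n,r$ positive integers. $\Lambda(n;r)$: compositions $(\lambda_1,\dots,\lambda_n)\in\mathbb{N}_0^n$ with sum $r$. $\Lambda(n,n;r)$: $n\times n$ nonnegative integer matrices with total sum $r$; $(\omega^1)_t=\sum_s\omega_{st}$, $(\omega^2)_s=\sum_t\omega_{st}$. For $i,j\in I(n,r)=\{1,\dots,n\}^r$, $\operatorname{wt}(i,j)_{st}=\#\{q:i_q=s,j_q=t\}$, $(i,j)\in\omega$ means $\operatorname{wt}(i,j)=\omega$. $S_R(n,r)=\mathrm{End}_{R\Sigma_r}((R^n)^{\otimes r})$ ($e_i\sigma=e_{i\sigma}$), with basis $\xi_\omega=\sum_{(i,j)\in\omega}e_{i,j}$ ($e_{i,j}e_k=\delta_{jk}e_i$); $\xi_\lambda:=\xi_{\mathrm{diag}(\lambda)}$ for $\lambda\in\Lambda(n;r)$. $\Lambda^1(n,n;r)$ is the set of upper triangular $\omega$ with $\sum_{k\le l}(l-k)\omega_{kl}\ge1$, and $J_R(n,r)$ is the $R$-span of $\{\xi_\omega:\omega\in\Lambda^1(n,n;r)\}$. Dominance: $\nu\trianglerighteq\mu$ if $\sum_{s=1}^t\nu_s\ge\sum_{s=1}^t\mu_s$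 for all $t$, and $\nu\triangleright\mu$ if $\nu\trianglerighteq\mu$ and $\nu\ne\mu$. *)

From HB Require Import structures.
From mathcomp Require Import all_boot all_order all_algebra all_fingroup.
Set Implicit Arguments. Unset Strict Implicit. Unset Printing Implicit Defensive.
Import GRing.Theory.
Local Open Scope ring_scope.

(* Indices 1..n are represented by 'I_n (0-based), positions 1..r by 'I_r. *)

Notation I n r := {ffun 'I_r -> 'I_n}.

Notation cmp n := {ffun 'I_n -> nat}.
Definition is_comp (n r : nat) (la : cmp n) : bool := (\sum_(s < n) la s == r)%N.

Notation nmat n := 'M[nat]_n.
Definition in_Lnnr (n r : nat) (w : nmat n) : bool :=
  (\sum_(s < n) \sum_(t < n) w s t == r)%N.

Definition om1 (n : nat) (w : nmat n) : cmp n := [ffun t => \sum_(s < n) w s t]%N.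
Definition om2 (n : nat) (w : nmat n) : cmp n := [ffun s => \sum_(t < n) w s t]%N.

Definition wt (n r : nat) (i j : I n r) : nmat n :=
  \matrix_(s, t) #|[pred q : 'I_r | (i q == s) && (j q == t)]|.

Definition diagc (n : nat) (la : cmp n) : nmat n :=
  \matrix_(s, t) (if s == t then la s else 0%N).

(* R-endomorphisms of (R^n)^{tensor r}, as matrices w.r.t. the basis e_i
   (i in I(n,r)): the entry at (i,j) is the coefficient of e_{i,j}, where
   e_{i,j} e_k = delta_{jk} e_i.  The Schur algebra S_R(n,r) is the subalgebra
   of Sigma_r-equivariant ones (see is_schur); multiplication is composition. *)
Notation EndT R n r := {ffun I n r * I n r -> R^o}.

Definition emul (R : pzRingType) (n r : nat) (A B : EndT R n r) : EndT R n r :=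
  [ffun p => \sum_(k : I n r) A (p.1, k) * B (k, p.2)].

Definition iact (n r : nat) (i : I n r) (sg : {perm 'I_r}) : I n r :=
  [ffun q => i (sg q)].
Definition is_schur (R : pzRingType) (n r : nat) (A : EndT R n r) : Prop :=
  forall (sg : {perm 'I_r}) (i j : I n r), A (iact i sg, iact j sg) = A (i, j).

Definition xi (R : pzRingType) (n r : nat) (w : nmat n) : EndT R n r :=
  [ffun p => if wt p.1 p.2 == w then 1 else 0].

Definition xil (R : pzRingType) (n r : nat) (la : cmp n) : EndT R n r :=
  xi R r (diagc la).

Definition in_L1 (n r : nat) (w : nmat n) : bool :=
  [&& in_Lnnr r w,
      [forall s : 'I_n, forall t : 'I_n, (t < s)%N ==> (w s t == 0%N)] &
      (1 <= \sum_(k < n) \sum_(l < n | (k <= l)%N) (l - k) * w k l)%N].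

Definition in_J (R : pzRingType) (n r : nat) (x : EndT R n r) : Prop :=
  exists (s : seq (nmat n)) (c : nmat n -> R),
    all (@in_L1 n r) s /\ x = \sum_(w <- s) c w *: xi R r w.

Definition in_xJx (R : pzRingType) (n r : nat) (nu mu : cmp n) (y : EndT R n r) : Prop :=
  exists x : EndT R n r, in_J x /\ y = emul (emul (xil R r nu) x) (xil R r mu).

Definition domin (n : nat) (nu mu : cmp n) : bool :=
  [forall t : 'I_n, (\sum_(s < n | (s <= t)%N) mu s <= \sum_(s < n | (s <= t)%N) nu s)%N].
Definition sdomin (n : nat) (nu mu : cmp n) : bool := domin nu mu && (nu != mu).

Definition is_basis_of (R : pzRingType) (n r : nat) (P : pred (nmat n))
    (M : EndT R n r -> Prop) : Prop :=
  [/\ (forall w, P w -> M (xi R r w)),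
      (forall (s : seq (nmat n)) (c : nmat n -> R), uniq s -> all P s ->
         \sum_(w <- s) c w *: xi R r w = 0 -> forall w, w \in s -> c w = 0) &
      (forall y, M y -> exists (s : seq (nmat n)) (c : nmat n -> R),
         all P s /\ y = \sum_(w <- s) c w *: xi R r w)].

(* Since wt i j has row sums the content of i and
   column sums the content of j, xi_nu xi_omega xi_mu is xi_omega when
   omega^1 = mu and omega^2 = nu, and 0 otherwise.  For omega in Lambda^1 the
   row sums strictly dominate the column sums: upper triangularity gives
   dominance, and weighting row and column s by n - s shows the two weighted
   sums differ by sum (l - k) omega_kl >= 1.  Finally the xi_omega have pairwise
   disjoint nonempty supports, hence are linearly independent. *)

From mathcomp Require Import all_boot all_order all_algebra all_fingroup zify.
Import GRing.Theory.
Local Open Scope ring_scope.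
Set Implicit Arguments. Unset Strict Implicit.

Lemma card_pred_sum (T : finType) (P : pred T) : #|[pred q | P q]| = (\sum_q P q)%N.
Proof. by rewrite -sum1_card big_mkcond; apply: eq_bigr => q _; rewrite inE; case: (P q). Qed.

Lemma scale_ffunE (R : pzRingType) (aT : finType) (c : R) (f : {ffun aT -> R^o}) p :
  (c *: f) p = c * f p.
Proof. by rewrite ffunE. Qed.

Definition cont n r (i : I n r) : cmp n := [ffun s => #|[pred q | i q == s]|].

Lemma om2_wt n r (i j : I n r) : om2 (wt i j) = cont i.
Proof.
apply/ffunP => s; rewrite !ffunE.
under eq_bigr => t _ do rewrite mxE card_pred_sum.
rewrite card_pred_sum exchange_big /=; apply: eq_bigr => q _.
case: (i q == s) => /=; last by rewrite big1.
by rewrite (bigD1 (j q)) //= eqxx big1 // => t /negbTE; rewrite eq_sym => ->.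
Qed.

Lemma om1_wt n r (i j : I n r) : om1 (wt i j) = cont j.
Proof.
apply/ffunP => t; rewrite !ffunE.
under eq_bigr => s _ do rewrite mxE card_pred_sum.
rewrite card_pred_sum exchange_big /=; apply: eq_bigr => q _.
case: (j q == t); last by rewrite big1 // => s _; rewrite andbF.
by rewrite (bigD1 (i q)) //= eqxx big1 // => s /negbTE; rewrite eq_sym => ->.
Qed.

Lemma wt_eq_diagc n r (i k : I n r) (la : cmp n) :
  (wt i k == diagc la) = (i == k) && (cont i == la).
Proof.
have [<-|neik] /= := eqVneq i k.
  apply/eqP/eqP => [wt_ii|<-].
    apply/ffunP => s; have := congr1 (fun M : nmat n => M s s) wt_ii.
    by rewrite !mxE eqxx ffunE => <-; apply: eq_card => q; rewrite !inE andbb.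
  apply/matrixP => s t; rewrite !mxE ffunE; case: eqP => [->|neq_st].
    by apply: eq_card => q; rewrite !inE andbb.
  apply: eq_card0 => q; rewrite !inE.
  by apply/negP => /andP [/eqP iq_s /eqP iq_t]; apply: neq_st; rewrite -iq_s -iq_t.
apply/negbTE/eqP => wt_ik.
have [q neq_q] : exists q, i q != k q.
  by apply/existsP; apply: contraR neik; rewrite negb_exists => /forallP eq_ik;
     apply/eqP/ffunP => q; apply/eqP; rewrite -[_ == _]negbK eq_ik.
have := congr1 (fun M : nmat n => M (i q) (k q)) wt_ik.
by rewrite !mxE (negbTE neq_q) => /card0_eq/(_ q); rewrite !inE !eqxx.
Qed.

Lemma xiE (R : pzRingType) n r (w : nmat n) (i j : I n r) :
  xi R r w (i, j) = if wt i j == w then 1 else 0.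
Proof. by rewrite ffunE. Qed.

Lemma xilE (R : pzRingType) n r (la : cmp n) (i j : I n r) :
  xil R r la (i, j) = if (i == j) && (cont i == la) then 1 else 0.
Proof. by rewrite xiE wt_eq_diagc. Qed.

Lemma lincomb_xiE (R : pzRingType) n r (s : seq (nmat n)) (c : nmat n -> R) (i j : I n r) :
  (\sum_(w <- s) c w *: xi R r w) (i, j) = \sum_(w <- s | wt i j == w) c w.
Proof.
rewrite sum_ffunE [RHS]big_mkcond; apply: eq_bigr => w _.
by rewrite scale_ffunE xiE; case: eqP; rewrite ?mulr1 ?mulr0.
Qed.

Section Sandwich.

Variables (R : pzRingType) (n r : nat) (nu mu : cmp n).

Definition sandwich (x : EndT R n r) : EndT R n r :=
  emul (emul (xil R r nu) x) (xil R r mu).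

Lemma sandwichE x i j :
  sandwich x (i, j) = if (cont i == nu) && (cont j == mu) then x (i, j) else 0.
Proof.
rewrite ffunE /= (bigD1 j) //= big1 => [|k neq_kj]; last first.
  by rewrite xilE (negbTE neq_kj) mulr0.
rewrite addr0 xilE eqxx /= ffunE /= (bigD1 i) //= big1 => [|k neq_ki]; last first.
  by rewrite xilE eq_sym (negbTE neq_ki) mul0r.
rewrite addr0 xilE eqxx /=.
by case: (cont i == nu); case: (cont j == mu); rewrite ?mul1r ?mulr1 ?mul0r ?mulr0.
Qed.

Lemma sandwich_xi w :
  sandwich (xi R r w) = if (om1 w == mu) && (om2 w == nu) then xi R r w else 0.
Proof.
apply/ffunP => [[i j]]; rewrite sandwichE xiE.
have [<-|neq_w] := eqVneq (wt i j) w.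
  by rewrite om1_wt om2_wt andbC; case: ifP; rewrite ffunE /= ?eqxx.
by rewrite if_same; case: ifP; rewrite ffunE /= ?(negbTE neq_w).
Qed.

Lemma sandwich_lincomb (I : Type) (s : seq I) (c : I -> R) (F : I -> EndT R n r) :
  sandwich (\sum_(k <- s) c k *: F k) = \sum_(k <- s) c k *: sandwich (F k).
Proof.
apply/ffunP => [[i j]]; rewrite sandwichE !sum_ffunE.
under [RHS]eq_bigr => k _ do rewrite scale_ffunE sandwichE.
case: ifP => _; last by rewrite big1 // => k _; rewrite mulr0.
by apply: eq_bigr => k _; rewrite scale_ffunE.
Qed.

End Sandwich.

Section UpperTriangular.

Variables (n : nat) (w : nmat n).
Hypothesis w_upper : forall s t : 'I_n, (t < s)%N -> w s t = 0%N.

Lemma domin_om2_om1 : domin (om2 w) (om1 w).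
Proof.
apply/forallP => t.
under eq_bigr => s _ do rewrite ffunE.
under [X in (_ <= X)%N]eq_bigr => s _ do rewrite ffunE.
rewrite exchange_big /= (bigID (fun u : 'I_n => (u <= t)%N)) /=.
rewrite [X in (_ + X)%N]big1 ?addn0 => [|u gt_ut]; last first.
  by apply: big1 => v le_vt; apply: w_upper; rewrite (leq_ltn_trans le_vt) // ltnNge.
apply: leq_sum => u _.
by rewrite [X in (_ <= X)%N](bigID (fun s : 'I_n => (s <= t)%N)) /= leq_addr.
Qed.

(* Row s is weighted by n - s and column t by n - t; the difference of the
   weights on an entry (s, t) with s <= t is exactly t - s. *)
Lemma weighted_om2_om1 :
  (\sum_(s < n) (n - s) * om2 w s =
   \sum_(t < n) (n - t) * om1 w t +
   \sum_(k < n) \sum_(l < n | (k <= l)%N) (l - k) * w k l)%N.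
Proof.
transitivity (\sum_(s < n) \sum_(t < n) ((n - t) * w s t + (t - s) * w s t))%N.
  apply: eq_bigr => s _; rewrite ffunE big_distrr /=; apply: eq_bigr => t _.
  have [lt_ts|le_st] := ltnP t s; first by rewrite w_upper // !muln0.
  rewrite -mulnDl; congr (_ * _)%N; have := ltn_ord t; lia.
under eq_bigr => s _ do rewrite big_split /=.
rewrite big_split; congr (_ + _)%N.
  by rewrite exchange_big; apply: eq_bigr => t _; rewrite ffunE big_distrr.
apply: eq_bigr => s _; rewrite [RHS]big_mkcond; apply: eq_bigr => t _.
by case: leqP => // /ltnW; rewrite -subn_eq0 => /eqP ->.
Qed.

End UpperTriangular.

Lemma in_L1_sdomin n r (w : nmat n) : in_L1 r w -> sdomin (om2 w) (om1 w).
Proof.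
case/and3P => _ /forallP w_upper height_gt0.
have upper : forall s t : 'I_n, (t < s)%N -> w s t = 0%N.
  by move=> s t lt_ts; apply/eqP; move: (w_upper s) => /forallP/(_ t)/implyP; apply.
rewrite /sdomin domin_om2_om1 //=; apply/eqP => eq_om.
move: (weighted_om2_om1 upper); rewrite eq_om -[X in X = _]addn0 => /addnI height0.
by rewrite -height0 in height_gt0.
Qed.

Lemma card_pred_count (T : finType) (P : pred T) : #|[pred q | P q]| = count P (enum T).
Proof. by rewrite enumT cardE /enum_mem -size_filter. Qed.

(* List each pair (s, t) with multiplicity w s t; the r entries of this list,
   read as pairs (i q, j q), give the multi-indices. *)
Lemma exists_wt_eq n r (w : nmat n) : in_Lnnr r w -> exists i j : I n r, wt i j = w.
Proof.
move/eqP=> sum_w.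
pose l := flatten [seq nseq (w p.1 p.2) p | p <- enum {: 'I_n * 'I_n}].
have count_l p : count_mem p l = w p.1 p.2.
  rewrite count_flatten -map_comp sumnE big_map big_enum /=.
  rewrite (bigD1 p) //= count_nseq /= eqxx mul1n big1 ?addn0 // => p' neq_p'.
  by rewrite count_nseq /= (negbTE neq_p').
have size_l : size l == r.
  rewrite size_flatten /shape -map_comp sumnE big_map big_enum /=.
  rewrite -sum_w pair_bigA /=; apply/eqP; apply: eq_bigr => p _.
  by rewrite size_nseq.
pose t := Tuple size_l.
exists [ffun q => (tnth t q).1], [ffun q => (tnth t q).2].
apply/matrixP => s u; rewrite mxE.
transitivity #|[pred q | tnth t q == (s, u)]|.
  by apply: eq_card => q; rewrite !inE !ffunE; case: (tnth t q).
rewrite card_pred_count -(count_l (s, u)).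
have -> : l = tval t by [].
by rewrite -[in RHS](map_tnth_enum t) [in RHS]count_map.
Qed.

Lemma xi_free (R : pzRingType) n r (s : seq (nmat n)) (c : nmat n -> R) :
  uniq s -> all (@in_Lnnr n r) s -> \sum_(w <- s) c w *: xi R r w = 0 ->
  forall w, w \in s -> c w = 0.
Proof.
move=> uniq_s Lnnr_s sum0 w s_w.
have [i [j wt_ij]] := exists_wt_eq (allP Lnnr_s w s_w).
have := congr1 (fun f : EndT R n r => f (i, j)) sum0.
rewrite /= lincomb_xiE ffunE wt_ij -big_filter.
rewrite (@eq_filter _ _ (pred1 w)) => [|v]; last by rewrite /= eq_sym.
by rewrite filter_pred1_uniq // big_seq1.
Qed.

Theorem proposition4p4 (R : comPzRingType) (n r : nat) (n_gt0 : (0 < n)%N)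
    (r_gt0 : (0 < r)%N) (nu mu : cmp n) (Hnu : is_comp r nu) (Hmu : is_comp r mu) :
  (~~ sdomin nu mu -> forall y : EndT R n r, in_xJx nu mu y -> y = 0) /\
  (sdomin nu mu ->
     @is_basis_of R n r
       (fun w : nmat n => [&& in_L1 r w, om1 w == mu & om2 w == nu])
       (@in_xJx R n r nu mu)).
Proof.
split=> [not_sdom y [x [[s [c [L1_s ->]]] ->]] | sdom].
  rewrite -/(sandwich nu mu _) sandwich_lincomb big_seq big1 // => w s_w.
  rewrite sandwich_xi; case: ifP => [/andP [/eqP om1_w /eqP om2_w] | _]; last first.
    by rewrite scaler0.
  by rewrite -om1_w -om2_w (in_L1_sdomin (allP L1_s w s_w)) in not_sdom.
split=> [w /and3P [L1_w om1_w om2_w] | s c uniq_s all_s | y [x [[s [c [L1_s ->]]] ->]]].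
- exists (xi R r w); split; last by rewrite -/(sandwich nu mu _) sandwich_xi om1_w om2_w.
  by exists [:: w], (fun=> 1); rewrite /= L1_w big_seq1 scale1r.
- by apply: xi_free uniq_s _; apply/allP => w /(allP all_s) /and3P [/and3P []].
- exists [seq w <- s | [&& in_L1 r w, om1 w == mu & om2 w == nu]], c.
  split; first by rewrite filter_all.
  rewrite -/(sandwich nu mu _) sandwich_lincomb big_filter [RHS]big_mkcond.
  apply: eq_big_seq => w s_w; rewrite sandwich_xi (allP L1_s w s_w) /=.
  by case: ifP; rewrite ?scaler0.
Qed.
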